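(* Let $L$ be a finite distributive lattice, let $m$ be the maximum size of an antichain in $\operatorname{Mi}(L)$, and put $Q_L(x)=\sum_{k=0}^m q_k(L)x^k$ and $D_L^-(x)=\sum_{k=0}^m d_k^-(L)x^k$. Then $Q_L(x)=D_L^-(1+x)$.
   Context: $\operatorname{Mi}(L)$ is the set of meet-irreducible elements of $L$, as a poset under the order of $L$. For a finite lattice $M$ and $k\ge0$, $q_k(M)$ is the number of convex sublattices (intervals) of $M$ isomorphic to the Boolean lattice $\mathbf{B}_k$ with $2^k$ elements. For $a\in M$, $\deg^-_M(a)$ is the number of elements of $M$ covering $a$, and $d_k^-(M)$ is the number of $a\in M$ with $\deg^-_M(a)=k$. *)

From mathcomp Require Import all_boot all_order all_algebra.
Set Implicit Arguments. Unset Strict Implicit. Unset Printing Implicit Defensive.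
Import Order.TTheory GRing.Theory.

Section Defs.
Local Open Scope order_scope.
Context {disp : Order.disp_t} {L : finDistrLatticeType disp}.

Definition covers (a b : L) : bool :=
  (a < b) && [forall c : L, ~~ ((a < c) && (c < b))].

(* meet-irreducible: a is not the top element (the empty meet), and
   a = x meet y implies a = x or a = y *)
Definition meet_irr (a : L) : bool :=
  [exists b : L, a < b] &&
  [forall x : L, forall y : L, (a == x `&` y) ==> ((a == x) || (a == y))].

Definition Mi : {set L} := [set a | meet_irr a].

Definition antichain (S : {set L}) : bool :=
  [forall x in S, forall y in S, (x != y) ==> ~~ (x <= y)].

Definition mwidth : nat :=
  \max_(S : {set L} | (S \subset Mi) && antichain S) #|S|.

(* the interval [a,b] is isomorphic (as a poset, hence as a lattice)
   to the Boolean lattice B_k = subsets of a k-element set *)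
Definition interval_boolean (k : nat) (a b : L) : bool :=
  [exists f : {ffun {set 'I_k} -> L},
     [forall A : {set 'I_k}, forall B : {set 'I_k},
        (f A <= f B) == (A \subset B)] &&
     [forall x : L, ((a <= x) && (x <= b)) == [exists A, f A == x]]].

Definition qk (k : nat) : nat :=
  #|[set p : L * L | (p.1 <= p.2) && interval_boolean k p.1 p.2]|.

Definition degm (a : L) : nat := #|[set b : L | covers a b]|.

Definition dk (k : nat) : nat := #|[set a : L | degm a == k]|.

Local Open Scope ring_scope.

Definition QL : {poly int} := \sum_(k < mwidth.+1) (qk k)%:R *: 'X^k.
Definition DL : {poly int} := \sum_(k < mwidth.+1) (dk k)%:R *: 'X^k.
End Defs.

From mathcomp Require Import all_boot all_order all_algebra.
Set Implicit Arguments. Unset Strict Implicit. Unset Printing Implicit Defensive.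
Import Order.TTheory GRing.Theory.

(* In a distributive lattice, the intervals [a, b] isomorphic to B_k are
   exactly those whose top b is the join of k upper covers of a: for a set S
   of covers of a, the map A |-> a \/ (\/ A) is an isomorphism from the
   subsets of S onto [a, a \/ (\/ S)].  Hence q_k(L) = sum_a C(deg^-(a), k),
   and summing over k gives Q_L(x) = sum_a (1 + x)^deg^-(a) = D_L^-(1 + x).
   Truncating both polynomials at m loses nothing: sending each cover c of a
   to the largest element above a and not above c yields deg^-(a) pairwise
   incomparable meet-irreducible elements, so deg^-(a) <= m. *)

Section DistrLattice.
Local Open Scope order_scope.
Context {disp : Order.disp_t} {L : finDistrLatticeType disp}.
Implicit Types (a b c x y : L) (s t : seq L).

Lemma coversP a c :
  reflect (a < c /\ forall z, a < z -> z < c -> False) (covers a c).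
Proof.
apply: (iffP andP) => [[ac /forallP H]|[ac H]]; split => //.
  by move=> z az zc; move: (H z); rewrite az zc.
by apply/forallP => z; apply/negP => /andP[] /H; auto.
Qed.

Lemma covers_le_eq a c c' : covers a c -> covers a c' -> c <= c' -> c = c'.
Proof.
move=> /coversP[ac _] /coversP[_ H] cc'; apply/eqP/negPn/negP => ne.
by apply: (H c) => //; rewrite lt_neqAle ne.
Qed.

Lemma cover_meet_nle a c x : covers a c -> a <= x -> ~~ (c <= x) -> c `&` x = a.
Proof.
move=> /coversP[ac H] ax ncx.
have lt_cx_c : c `&` x < c.
  by rewrite lt_neqAle leIl andbT; apply: contra ncx => /eqP <-; apply: leIr.
have : a <= c `&` x by rewrite lexI ax (ltW ac).
by rewrite le_eqVlt => /orP[/eqP <-//|/H /(_ lt_cx_c)].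
Qed.

Lemma covers_meet a c c' : covers a c -> covers a c' -> c != c' -> c `&` c' = a.
Proof.
move=> hc hc' ne; apply: cover_meet_nle => //; first by case/coversP: hc' => /ltW.
by apply: contra ne => /(covers_le_eq hc hc') ->.
Qed.

Definition join_from a s : L := \big[Order.join/a]_(c <- s) c.

Lemma join_from_le a s y :
  (join_from a s <= y) = (a <= y) && all (fun c => c <= y) s.
Proof.
rewrite /join_from; elim: s => [|c s IH]; first by rewrite big_nil andbT.
by rewrite big_cons leUx IH /= andbCA.
Qed.

Lemma le_join_from a s : a <= join_from a s.
Proof. by have := lexx (join_from a s); rewrite join_from_le => /andP[]. Qed.

Lemma mem_le_join_from a s c : c \in s -> c <= join_from a s.
Proof. by have := lexx (join_from a s); rewrite join_from_le => /andP[_ /allP]; apply. Qed.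

Lemma eq_join_from a s t : s =i t -> join_from a s = join_from a t.
Proof.
move=> st; apply: le_anti; rewrite !join_from_le !le_join_from /=.
by apply/andP; split; apply/allP => c cs; apply: mem_le_join_from;
  [rewrite -st | rewrite st].
Qed.

Lemma meet_join_from x a s :
  x `&` join_from a s = join_from (x `&` a) [seq x `&` c | c <- s].
Proof.
by rewrite /join_from big_map; apply: (big_morph (Order.meet x)) => // y z; apply: meetUr.
Qed.

Lemma meet_join_from_id a c s :
  a <= c -> {in s, forall x, c `&` x = a} -> c `&` join_from a s = a.
Proof.
move=> ac H; rewrite meet_join_from (meet_r ac); apply: le_anti.
rewrite le_join_from andbT join_from_le lexx /=.
by apply/allP => _ /mapP[x xs ->]; rewrite H.
Qed.

Lemma cover_meet_join_from a c s :
  covers a c -> all (covers a) s -> c \notin s -> c `&` join_from a s = a.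
Proof.
move=> hc /allP hs cs; apply: meet_join_from_id; first by case/coversP: hc => /ltW.
move=> x xs; apply: covers_meet hc (hs x xs) _.
by apply: contraNneq cs => ->.
Qed.

Lemma cover_le_join_from a c s :
  covers a c -> all (covers a) s -> (c <= join_from a s) = (c \in s).
Proof.
move=> hc hs; apply/idP/idP => [cJ|]; last exact: mem_le_join_from.
apply/contraT => cs; have := cover_meet_join_from hc hs cs.
by rewrite meet_l // => ca; case/coversP: hc; rewrite ca ltxx.
Qed.

Lemma meet_join_from_covers a x s : a <= x -> all (covers a) s ->
  x `&` join_from a s = join_from a [seq c <- s | c <= x].
Proof.
move=> ax /allP hs; apply: le_anti; apply/andP; split.
  rewrite meet_join_from (meet_r ax) join_from_le le_join_from /=.
  apply/allP => _ /mapP[c cs ->]; have [cx|ncx] := boolP (c <= x).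
    by rewrite meet_r // mem_le_join_from // mem_filter cx.
  by rewrite meetC (cover_meet_nle (hs c cs)) // le_join_from.
rewrite lexI !join_from_le ax le_join_from /=.
by apply/andP; split; apply/allP => c; rewrite mem_filter => /andP[// cx];
  apply: mem_le_join_from.
Qed.

Definition upcovers a : {set L} := [set c | covers a c].
Definition upcovers_le a b : {set L} := [set c in upcovers a | c <= b].

Lemma all_upcovers a (S : {set L}) : S \subset upcovers a -> all (covers a) (enum S).
Proof. by move=> sS; apply/allP => c; rewrite mem_enum => /(subsetP sS); rewrite inE. Qed.

Lemma upcovers_le_join a (S : {set L}) :
  S \subset upcovers a -> upcovers_le a (join_from a (enum S)) = S.
Proof.
move=> sS; apply/setP => c; rewrite !inE; have [hc|nhc] /= := boolP (covers a c).
  by rewrite cover_le_join_from ?mem_enum ?all_upcovers.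
by apply/esym/negP => /(subsetP sS); rewrite inE (negbTE nhc).
Qed.

Section BooleanInterval.
Variables (k : nat) (a b : L) (f : {set 'I_k} -> L).
Hypothesis f_le : forall A B, (f A <= f B) = (A \subset B).
Hypothesis f_onto : forall x, ((a <= x) && (x <= b)) = [exists A, f A == x].

Let f_inj : injective f.
Proof. by move=> A B fAB; apply/eqP; rewrite eqEsubset -!f_le fAB lexx. Qed.

Let f_range A : (a <= f A) && (f A <= b).
Proof. by rewrite f_onto; apply/existsP; exists A. Qed.

Let f_surj x : a <= x -> x <= b -> exists A, f A = x.
Proof.
by move=> ax xb; have := f_onto x; rewrite ax xb => /esym/existsP[A /eqP]; exists A.
Qed.

Let f_set0 : f set0 = a.
Proof.
have /andP[aA Ab] := f_range set0; have [A eA] := f_surj (lexx a) (le_trans aA Ab).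
by apply/le_anti; rewrite aA -eA f_le sub0set.
Qed.

Let f_setT : f setT = b.
Proof.
have /andP[aA Ab] := f_range setT; have [A eA] := f_surj (le_trans aA Ab) (lexx b).
by apply/le_anti; rewrite Ab -eA f_le subsetT.
Qed.

Let covers_f_set1 i : covers a (f [set i]).
Proof.
apply/coversP; split.
  rewrite -f_set0 lt_neqAle f_le sub0set andbT.
  by apply/eqP => /f_inj/setP/(_ i); rewrite !inE eqxx.
move=> z az zi; have /andP[_ ib] := f_range [set i].
have [C eC] := f_surj (ltW az) (le_trans (ltW zi) ib).
move: az zi; rewrite -eC -f_set0 !lt_neqAle !f_le subset1 => /andP[C0 _] /andP[Ci].
by case/orP => /eqP eqC; rewrite eqC eqxx ?orbT in C0 Ci.
Qed.

Let upcovers_le_atoms : upcovers_le a b = [set f [set i] | i : 'I_k].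
Proof.
apply/setP => c; rewrite !inE; apply/andP/imsetP => [[cc cb]|[i _ ->]].
  have /coversP[ac H] := cc; have [C eC] := f_surj (ltW ac) cb.
  have : C != set0 by apply: contraTneq ac => C0; rewrite -eC C0 f_set0 ltxx.
  case/set0Pn => i iC; exists i => //.
  have /coversP[ai _] := covers_f_set1 i.
  have : f [set i] <= c by rewrite -eC f_le sub1set.
  by rewrite le_eqVlt => /orP[/eqP//|/(H _ ai)].
by split; [exact: covers_f_set1 | have /andP[] := f_range [set i]].
Qed.

Lemma boolean_interval_upcovers :
  #|upcovers_le a b| = k /\ b = join_from a (enum (upcovers_le a b)).
Proof.
split.
  rewrite upcovers_le_atoms card_imset ?card_ord // => i j /f_inj; exact: set1_inj.
have /andP[ab _] := f_range setT; rewrite f_setT in ab.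
have Jb : join_from a (enum (upcovers_le a b)) <= b.
  by rewrite join_from_le ab; apply/allP => c; rewrite mem_enum inE => /andP[].
apply/le_anti; rewrite Jb andbT.
have [C eC] := f_surj (le_join_from _ _) Jb; rewrite -eC -f_setT f_le.
apply/subsetP => i _; rewrite -sub1set -f_le eC mem_le_join_from //.
by rewrite mem_enum upcovers_le_atoms imset_f.
Qed.
End BooleanInterval.

Lemma interval_boolean_upcovers k a b : interval_boolean k a b ->
  #|upcovers_le a b| = k /\ b = join_from a (enum (upcovers_le a b)).
Proof.
case/existsP => f /andP[/forallP f_le /forallP f_onto].
apply: (@boolean_interval_upcovers _ _ _ f) => [A B|x]; last exact/eqP/f_onto.
by apply/eqP; move/forallP: (f_le A); apply.
Qed.

Section JoinOfCovers.
Variables (a : L) (S : {set L}).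
Hypothesis S_covers : S \subset upcovers a.

Let f (A : {set 'I_#|S|}) := join_from a [seq enum_val i | i in A].

Let covers_enum_val (i : 'I_#|S|) : covers a (enum_val i).
Proof. by have := subsetP S_covers _ (enum_valP i); rewrite inE. Qed.

Let f_le A B : (f A <= f B) = (A \subset B).
Proof.
apply/idP/idP => [fAB|/subsetP sAB].
  apply/subsetP => i iA.
  rewrite -(mem_image enum_val_inj) -(cover_le_join_from (covers_enum_val i)).
    by apply: le_trans fAB; apply/mem_le_join_from/image_f.
  by apply/allP => _ /imageP[j _ ->].
rewrite join_from_le le_join_from; apply/allP => _ /imageP[i iA ->].
exact/mem_le_join_from/image_f/sAB.
Qed.

Let f_onto x :
  ((a <= x) && (x <= join_from a (enum S))) = [exists A, f A == x].
Proof.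
apply/idP/existsP => [/andP[ax xS]|[A /eqP <-]]; last first.
  rewrite le_join_from join_from_le le_join_from; apply/allP => _ /imageP[i _ ->].
  by rewrite mem_le_join_from ?mem_enum ?enum_valP.
exists [set i | enum_val i <= x]; apply/eqP.
rewrite -[RHS](meet_l xS) meet_join_from_covers ?all_upcovers //.
apply: eq_join_from => c.
rewrite mem_filter mem_enum; apply/imageP/andP => [[i]|[cx cS]].
  by rewrite inE => ix ->; rewrite ix enum_valP.
by exists (enum_rank_in cS c); rewrite ?inE enum_rankK_in.
Qed.

Lemma interval_boolean_join : interval_boolean #|S| a (join_from a (enum S)).
Proof.
apply/existsP; exists (finfun f); apply/andP; split.
  by apply/forallP => A; apply/forallP => B; rewrite !ffunE f_le.
by apply/forallP => x; rewrite f_onto; apply/eqP/eq_existsb => A; rewrite ffunE.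
Qed.
End JoinOfCovers.

Lemma card_interval_boolean k a :
  #|[set b | interval_boolean k a b]| = 'C(degm a, k).
Proof.
have -> : [set b | interval_boolean k a b] = [set join_from a (enum S) |
          S : {set L} in [set S : {set L} | S \subset upcovers a & #|S| == k]].
  apply/setP => b; rewrite inE; apply/idP/imsetP => [|[S]].
    case/interval_boolean_upcovers => card_k eb; exists (upcovers_le a b) => //.
    by rewrite inE card_k eqxx andbT; apply/subsetP => c; rewrite inE => /andP[].
  by rewrite inE => /andP[sS /eqP <-] ->; apply: interval_boolean_join.
rewrite card_in_imset ?cards_draws // => S T.
rewrite !inE => /andP[sS _] /andP[sT _] eST.
by rewrite -(upcovers_le_join sS) eST upcovers_le_join.
Qed.

Lemma interval_boolean_le k a b : interval_boolean k a b -> a <= b.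
Proof. by case/interval_boolean_upcovers => _ ->; apply: le_join_from. Qed.

Definition max_avoiding a c : L :=
  join_from a (enum [set x | (a <= x) && ~~ (c <= x)]).

Section MaxAvoiding.
Variables a c : L.
Hypothesis a_c : covers a c.

Lemma le_max_avoiding x : a <= x -> ~~ (c <= x) -> x <= max_avoiding a c.
Proof. by move=> ax cx; rewrite mem_le_join_from // mem_enum inE ax. Qed.

Lemma max_avoiding_nge : ~~ (c <= max_avoiding a c).
Proof.
have : c `&` max_avoiding a c = a.
  apply: meet_join_from_id => [|x]; first by case/coversP: a_c => /ltW.
  by rewrite mem_enum inE => /andP[ax cx]; apply: cover_meet_nle.
by move=> cm; apply: contraTN a_c => /meet_l; rewrite cm => ->; rewrite /covers ltxx.
Qed.

Lemma lt_max_avoiding x : max_avoiding a c < x -> c <= x.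
Proof.
move=> mx; have ax : a <= x := le_trans (le_join_from _ _) (ltW mx).
by apply/contraT => ncx; rewrite -(lt_geF mx) le_max_avoiding.
Qed.

Lemma max_avoiding_meet_irr : meet_irr (max_avoiding a c).
Proof.
apply/andP; split.
  apply/existsP; exists (max_avoiding a c `|` c); rewrite lt_neqAle leUl andbT.
  by apply: contraNneq max_avoiding_nge => ->; apply: leUr.
apply/forallP => x; apply/forallP => y; apply/implyP => /eqP mxy.
apply: contraNT max_avoiding_nge; rewrite negb_or => /andP[mx my].
by rewrite mxy lexI !lt_max_avoiding // lt_neqAle ?mx ?my mxy ?leIl ?leIr.
Qed.

Lemma covers_le_max_avoiding c' : covers a c' -> c' != c -> c' <= max_avoiding a c.
Proof.
move=> a_c' c'c; apply: le_max_avoiding; first by case/coversP: a_c' => /ltW.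
by apply: contra c'c => /(covers_le_eq a_c a_c') ->.
Qed.

End MaxAvoiding.

Lemma degm_le_mwidth a : (degm a <= @mwidth disp L)%N.
Proof.
have avoid_inj : {in upcovers a &, injective (max_avoiding a)}.
  move=> c c'; rewrite !inE => a_c a_c' mcc'; apply/eqP/negPn/negP => cc'.
  have := covers_le_max_avoiding a_c' a_c cc'.
  by rewrite -mcc' (negbTE (max_avoiding_nge a_c)).
rewrite -[degm a]/#|upcovers a| -(card_in_imset avoid_inj) /mwidth.
apply: (@leq_bigmax_cond _ (fun S : {set L} => (S \subset Mi) && antichain S)).
apply/andP; split.
  by apply/subsetP => _ /imsetP[c a_c ->]; rewrite inE max_avoiding_meet_irr // -inE.
apply/forall_inP => _ /imsetP[c a_c ->]; apply/forall_inP => _ /imsetP[c' a_c' ->].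
rewrite inE in a_c; rewrite inE in a_c'.
apply/implyP => mcc'; have c'c : c' != c by apply: contraNneq mcc' => ->.
apply: contra (max_avoiding_nge a_c') => mc_mc'.
exact: le_trans (covers_le_max_avoiding a_c a_c' c'c) mc_mc'.
Qed.

End DistrLattice.

Local Open Scope ring_scope.

Section Polynomials.
Context {disp : Order.disp_t} {L : finDistrLatticeType disp}.

Lemma qk_sum_binomial k : @qk disp L k = (\sum_(a : L) 'C(degm a, k))%N.
Proof.
rewrite /qk; set S := [set p | _].
transitivity (\sum_(a : L) \sum_(b : L) (if (a, b) \in S then 1 else 0))%N.
  by rewrite pair_bigA -sum1_card big_mkcond; apply: eq_bigr => -[].
apply: eq_bigr => a _.
rewrite -card_interval_boolean -sum1_card [RHS]big_mkcond /=; apply: eq_bigr => b _.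
rewrite !inE /=; case: (boolP (interval_boolean k a b)) => [|_]; last by rewrite andbF.
by move/interval_boolean_le ->.
Qed.

Lemma QL_sum_powers : @QL disp L = \sum_(a : L) ('X + 1) ^+ degm a.
Proof.
rewrite /QL; under eq_bigr => k _ do rewrite qk_sum_binomial natr_sum scaler_suml.
rewrite exchange_big /=; apply: eq_bigr => a _.
rewrite exprD1n (big_ord_widen (@mwidth disp L).+1 (fun i => 'X ^+ i *+ 'C(degm a, i)));
  last by rewrite ltnS degm_le_mwidth.
rewrite [RHS]big_mkcond /=; apply: eq_bigr => i _; rewrite scaler_nat.
by case: ifP => // /negbT; rewrite -leqNgt => /bin_small ->.
Qed.

Lemma DL_comp_sum_powers :
  (@DL disp L) \Po ('X + 1) = \sum_(a : L) ('X + 1) ^+ degm a.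
Proof.
rewrite /DL linear_sum /=.
pose deg_ord (a : L) : 'I_(@mwidth disp L).+1 :=
  Ordinal (degm_le_mwidth a : (degm a < (@mwidth disp L).+1)%N).
rewrite [RHS](partition_big deg_ord xpredT) //=; apply: eq_bigr => k _.
rewrite comp_polyZ comp_Xn_poly scaler_nat /dk -sumr_const.
by apply: eq_big => [a|a]; rewrite inE ?(inj_eq val_inj) // => /eqP ->.
Qed.

End Polynomials.

Unset Implicit Arguments.

Theorem corollary8 (disp : Order.disp_t) (L : finDistrLatticeType disp) :
  @QL disp L = (@DL disp L) \Po ('X + 1).
Proof. by rewrite QL_sum_powers DL_comp_sum_powers. Qed.
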